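(* Let $p\ge 1$ be an integer. (i) For all $x\in[0,1]^p, y\in\{0,1\}^p$, and for all $x\in\{0,1\}^p, y\in[0,1]^p$, one has $\overline{\Delta}_{\mathrm{JML1}}(x,y)=\overline{\Delta}_{\mathrm{JML2}}(x,y)=\overline{\Delta}_{\mathrm{SJL},L^1}(x,y)$. (ii) For all $x,y\in[0,1]^p$, $\overline{\Delta}_{\mathrm{JML1},L^2}(x,y)=\overline{\Delta}_{\mathrm{JML2},L^2}(x,y)=\overline{\Delta}_{\mathrm{SJL},L^2}(x,y)$. (iii) There exist $x,y\in[0,1]^p$ with $\overline{\Delta}_{\mathrm{JML1}}(x,y)\neq\overline{\Delta}_{\mathrm{JML2}}(x,y)$ and $\overline{\Delta}_{\mathrm{JML2}}(x,y)\neq\overline{\Delta}_{\mathrm{SJL},L^1}(x,y)$.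
   Context: For $x,y \in [0,1]^p$ write $\|x\|_1=\sum_{i=1}^p |x_i|$, $\|x\|_2^2=\sum_{i=1}^p x_i^2$ and $\langle x,y\rangle=\sum_{i=1}^p x_iy_i$. Define, for $x,y\in[0,1]^p$: $\overline{\Delta}_{\mathrm{JML1}}(x,y) = 1 - \frac{\|x\|_1+\|y\|_1-\|x-y\|_1}{\|x\|_1+\|y\|_1+\|x-y\|_1}$, $\overline{\Delta}_{\mathrm{JML2}}(x,y) = 1 - \frac{\langle x,y\rangle}{\langle x,y\rangle+\|x-y\|_1}$, $\overline{\Delta}_{\mathrm{SJL},L^1}(x,y) = 1 - \frac{\langle x,y\rangle}{\|x\|_1+\|y\|_1-\langle x,y\rangle}$, $\overline{\Delta}_{\mathrm{JML1},L^2}(x,y) = 1 - \frac{\|x\|_2^2+\|y\|_2^2-\|x-y\|_2^2}{\|x\|_2^2+\|y\|_2^2+\|x-y\|_2^2}$, $\overline{\Delta}_{\mathrm{JML2},L^2}(x,y) = 1 - \frac{\langle x,y\rangle}{\langle x,y\rangle+\|x-y\|_2^2}$, $\overline{\Delta}_{\mathrm{SJL},L^2}(x,y) = 1 - \frac{\langle x,y\rangle}{\|x\|_2^2+\|y\|_2^2-\langle x,y\rangle}$. All these denominators vanish only when $x=y=0$; by convention each of these functions takes the value $0$ at $(x,y)=(0,0)$. *)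

From mathcomp Require Import all_boot all_order all_algebra.
Set Implicit Arguments. Unset Strict Implicit. Unset Printing Implicit Defensive.
Import Order.TTheory GRing.Theory Num.Theory.
Local Open Scope ring_scope.

Section Defs.
Variables (R : realFieldType) (p : nat).
Implicit Types x y : 'I_p -> R.

Definition norm1 x : R := \sum_(i < p) `|x i|.
Definition norm2sq x : R := \sum_(i < p) x i ^+ 2.
Definition inner x y : R := \sum_(i < p) x i * y i.
Definition vsub x y : 'I_p -> R := fun i => x i - y i.

Definition both_zero x y : bool := [forall i, (x i == 0) && (y i == 0)].

Definition in_unit_cube x : Prop := forall i, 0 <= x i <= 1.
Definition is_binary x : Prop := forall i, (x i == 0) || (x i == 1).

Definition D_JML1 x y : R :=
  if both_zero x y then 0 else
  1 - (norm1 x + norm1 y - norm1 (vsub x y)) / (norm1 x + norm1 y + norm1 (vsub x y)).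
Definition D_JML2 x y : R :=
  if both_zero x y then 0 else
  1 - inner x y / (inner x y + norm1 (vsub x y)).
Definition D_SJL_L1 x y : R :=
  if both_zero x y then 0 else
  1 - inner x y / (norm1 x + norm1 y - inner x y).
Definition D_JML1_L2 x y : R :=
  if both_zero x y then 0 else
  1 - (norm2sq x + norm2sq y - norm2sq (vsub x y)) / (norm2sq x + norm2sq y + norm2sq (vsub x y)).
Definition D_JML2_L2 x y : R :=
  if both_zero x y then 0 else
  1 - inner x y / (inner x y + norm2sq (vsub x y)).
Definition D_SJL_L2 x y : R :=
  if both_zero x y then 0 else
  1 - inner x y / (norm2sq x + norm2sq y - inner x y).
End Defs.

From mathcomp Require Import all_boot all_order all_algebra.
From mathcomp Require Import ring lra.

Set Implicit Arguments.
Unset Strict Implicit.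
Unset Printing Implicit Defensive.
Import Order.TTheory GRing.Theory Num.Theory.
Local Open Scope ring_scope.

(* Each of the six dissimilarities is 1 - r for a ratio r built from a
   "norm" N and the inner product.  Whenever N satisfies the polarization
   identity N (x - y) = N x + N y - 2 <x, y>, the three ratios all reduce to
   <x, y> / (N x + N y - <x, y>).  The squared L2 norm always satisfies it;
   the L1 norm satisfies it coordinatewise as soon as one coordinate is 0 or 1
   and the other lies in [0, 1].  For (iii), the constant vectors 1/2 and 1/4
   give the three pairwise different values 1/2, 2/3 and 4/5. *)

(* No nonvanishing hypothesis: every denominator is a multiple of a + b - c,
   so with x / 0 = 0 the identities hold unconditionally. *)
Lemma polarized_ratios_eq (R : numFieldType) (a b c d : R) :
  d = a + b - 2 * c ->
  (a + b - d) / (a + b + d) = c / (c + d) /\ c / (c + d) = c / (a + b - c).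
Proof.
move->; have -> : c + (a + b - 2 * c) = a + b - c by ring.
split=> //.
have -> : a + b - (a + b - 2 * c) = 2 * c by ring.
have -> : a + b + (a + b - 2 * c) = 2 * (a + b - c) by ring.
by rewrite -mulf_div divff ?mul1r ?pnatr_eq0.
Qed.

Lemma normB_binary (R : realDomainType) (x y : R) :
  0 <= x <= 1 -> (y == 0) || (y == 1) ->
  `|x - y| = `|x| + `|y| - 2 * (x * y).
Proof.
move=> /andP[x_ge0 x_le1] /orP[/eqP->|/eqP->].
- by rewrite subr0 normr0 ger0_norm //; ring.
- by rewrite ler0_norm ?subr_le0 // ger0_norm // normr1; ring.
Qed.

Section Dissimilarities.
Variables (R : realFieldType) (p : nat).
Implicit Types (x y : 'I_p -> R) (a b : R).

Lemma norm2sq_vsub x y :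
  norm2sq (vsub x y) = norm2sq x + norm2sq y - 2 * inner x y.
Proof.
rewrite /norm2sq /inner mulr_sumr -big_split -sumrB.
by apply: eq_bigr => i _; rewrite /vsub /=; ring.
Qed.

Lemma norm1_vsub_binary x y :
  (in_unit_cube x /\ is_binary y) \/ (is_binary x /\ in_unit_cube y) ->
  norm1 (vsub x y) = norm1 x + norm1 y - 2 * inner x y.
Proof.
move=> xy01; rewrite /norm1 /inner mulr_sumr -big_split -sumrB.
apply: eq_bigr => i _; rewrite /vsub /=.
case: xy01 => [[x01 y01]|[x01 y01]]; first exact: normB_binary (x01 i) (y01 i).
rewrite distrC [x i * _]mulrC (normB_binary (y01 i) (x01 i)).
by rewrite [`|y i| + _]addrC.
Qed.

Lemma norm1_cst a : norm1 (fun _ : 'I_p => a) = p%:R * `|a|.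
Proof. by rewrite /norm1 sumr_const card_ord mulr_natl. Qed.

Lemma inner_cst a b :
  inner (fun _ : 'I_p => a) (fun _ => b) = p%:R * (a * b).
Proof. by rewrite /inner sumr_const card_ord mulr_natl. Qed.

Hypothesis p_gt0 : (0 < p)%N.

Lemma both_zero_cstF a b :
  a != 0 -> both_zero (fun _ : 'I_p => a) (fun _ => b) = false.
Proof.
by move=> /negbTE a_neq0; apply/forallP => /(_ (Ordinal p_gt0)); rewrite a_neq0.
Qed.

Lemma L1_dissimilarities_half_quarter :
  let x := fun _ : 'I_p => 1 / 2 : R in let y := fun _ : 'I_p => 1 / 4 : R in
  [/\ D_JML1 x y = 1 / 2, D_JML2 x y = 2 / 3 & D_SJL_L1 x y = 4 / 5].
Proof.
rewrite /D_JML1 /D_JML2 /D_SJL_L1 both_zero_cstF; last by apply/eqP; lra.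
rewrite /vsub !norm1_cst inner_cst !ger0_norm; try lra.
have : (0 : R) < p%:R by rewrite ltr0n.
move: (p%:R : R) => P P_gt0.
by split; field; rewrite gt_eqF //; lra.
Qed.

End Dissimilarities.

Theorem theorem2 (R : realFieldType) (p : nat) (hp : (1 <= p)%N) :
  (* (i) *)
  (forall x y : 'I_p -> R,
     ((in_unit_cube x /\ is_binary y) \/ (is_binary x /\ in_unit_cube y)) ->
     D_JML1 x y = D_JML2 x y /\ D_JML2 x y = D_SJL_L1 x y) /\
  (* (ii) *)
  (forall x y : 'I_p -> R, in_unit_cube x -> in_unit_cube y ->
     D_JML1_L2 x y = D_JML2_L2 x y /\ D_JML2_L2 x y = D_SJL_L2 x y) /\
  (* (iii) *)
  (exists x y : 'I_p -> R, in_unit_cube x /\ in_unit_cube y /\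
     D_JML1 x y <> D_JML2 x y /\ D_JML2 x y <> D_SJL_L1 x y).
Proof.
split; [|split].
- move=> x y xy01; rewrite /D_JML1 /D_JML2 /D_SJL_L1; case: ifP => // _.
  by have [-> ->] := polarized_ratios_eq (norm1_vsub_binary xy01).
- move=> x y _ _; rewrite /D_JML1_L2 /D_JML2_L2 /D_SJL_L2; case: ifP => // _.
  by have [-> ->] := polarized_ratios_eq (norm2sq_vsub x y).
- exists (fun _ => 1 / 2), (fun _ => 1 / 4).
  have [-> -> ->] := L1_dissimilarities_half_quarter R hp.
  by split; [|split; [|split]] => [i|i||]; lra.
Qed.
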